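(* The following two statements are equivalent. (i) For every amphicheiral knot $K$ with Conway polynomial $C(z)=C_K(z)$, there is a polynomial $F\in\mathbb Z_4[z^2]$ such that $F^2=C(z)\,C(z^2)\,C(iz)$ in $\mathbb Z_4[z^2]$. (ii) For every amphicheiral knot $K$ with normalized Alexander polynomial $A(t)=A_K(t)$, the Laurent polynomial $A(t)\,A(-t)\,A(t^2)$ is a square in the ring $\mathbb Z_4[t,t^{-1}]$.
   Context: A knot is amphicheiral if it is isotopic to its mirror image, disregarding string orientation. The Conway polynomial $C(z)$ of a knot lies in $1+z^2\mathbb Z[z^2]$; hence $C(iz)$ and $C(z^2)$ are again integer polynomials in $z^2$, and the product $C(z)C(z^2)C(iz)$ is reduced modulo $4$ to give an element of $\mathbb Z_4[z^2]$. The Alexander polynomial $A(t)$ is normalized so that $A(t)=A(t^{-1})$ and $A(1)=1$; it is related to the Conway polynomial by $A(t)=C(t^{1/2}-t^{-1/2})$. *)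

From HB Require Import structures.
From mathcomp Require Import all_boot all_order all_algebra.
Set Implicit Arguments. Unset Strict Implicit. Unset Printing Implicit Defensive.
Import Order.TTheory GRing.Theory Num.Theory.
Local Open Scope ring_scope.

(* Conway polynomials.  A Conway polynomial C(z) lies in 1 + z^2 Z[z^2];   *)
(* we represent it by the polynomial  c : {poly int}  in the variable      *)
(* w = z^2, i.e.  C(z) = c(z^2), with constant term c(0) = 1.               *)
(*   C(z^2) = c(z^4) = c(w^2)   -->  c \Po 'X^2                             *)
(*   C(iz)  = c(-z^2) = c(-w)   -->  c \Po (- 'X)                           *)

Definition conway_C_sq (c : {poly int}) : {poly int} := c \Po 'X^2.
Definition conway_C_iz (c : {poly int}) : {poly int} := c \Po (- 'X).

Definition red4 (x : int) : 'Z_4 := x%:~R.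

Definition conway_prod_mod4 (c : {poly int}) : {poly 'Z_4} :=
  map_poly red4 (c * conway_C_sq c * conway_C_iz c).

Definition cond_i (c : {poly int}) : Prop :=
  exists F : {poly 'Z_4}, F ^+ 2 = conway_prod_mod4 c.

(* Laurent polynomials R[t, t^-1], modelled as the localization of R[t] at *)
(* t:  a pair (n, p) denotes  t^-n * p(t).                                 *)

Definition laurent (R : nzRingType) := (nat * {poly R})%type.

Definition leq_laurent (R : nzRingType) (a b : laurent R) : Prop :=
  a.2 * 'X^(b.1) = b.2 * 'X^(a.1).

Definition lconst (R : nzRingType) (x : R) : laurent R := (0%N, x%:P).
Definition ladd (R : nzRingType) (a b : laurent R) : laurent R :=
  ((a.1 + b.1)%N, a.2 * 'X^(b.1) + b.2 * 'X^(a.1)).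
Definition lmul (R : nzRingType) (a b : laurent R) : laurent R :=
  ((a.1 + b.1)%N, a.2 * b.2).
Definition lmap (R S : nzRingType) (f : R -> S) (a : laurent R) : laurent S :=
  (a.1, map_poly f a.2).

Definition leval (R : nzRingType) (p : {poly R}) (u : laurent R) : laurent R :=
  foldr (fun x acc => ladd (lconst x) (lmul u acc)) (lconst 0) p.

(* Normalized Alexander polynomial A(t) = C(t^{1/2} - t^{-1/2}) = c(t - 2 + t^-1),
   since (t^{1/2} - t^{-1/2})^2 = t - 2 + t^-1 = t^-1 (t - 1)^2.               *)
Definition alex_t (c : {poly int}) : laurent int :=
  leval c (1%N, ('X - 1) ^+ 2).
(* A(-t) = c(-t - 2 - t^-1) = c(t^-1 * (-(t + 1)^2)) *)
Definition alex_mt (c : {poly int}) : laurent int :=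
  leval c (1%N, - ('X + 1) ^+ 2).
(* A(t^2) = c(t^2 - 2 + t^-2) = c(t^-2 (t^2 - 1)^2) *)
Definition alex_t2 (c : {poly int}) : laurent int :=
  leval c (2%N, ('X ^+ 2 - 1) ^+ 2).

Definition cond_ii (c : {poly int}) : Prop :=
  exists G : laurent 'Z_4,
    leq_laurent (lmul G G)
      (lmap red4 (lmul (lmul (alex_t c) (alex_mt c)) (alex_t2 c))).

From HB Require Import structures.
From mathcomp Require Import all_boot all_order all_algebra.
From mathcomp Require Import zify ring.

(* Let P be C(z) C(z^2) C(iz) mod 4, a polynomial in w = z^2.  Modulo 4,
   (t + 1)^2 = (t - 1)^2 and (t^2 - 1)^2 = (t - 1)^4, so A(t) A(-t) A(t^2) = P(u)
   with u = t - 2 + t^-1 = (t - 1)^2 / t; hence (i) implies (ii).  Conversely, let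
   P(u) = G^2 and split P = e(w)^2 + w o(w)^2 modulo 2.  Then
   t G^2 = t e(u)^2 + ((t - 1) o(u))^2 over F_2, and since derivatives of squares
   vanish in characteristic 2, differentiating gives G = e(u) mod 2.  A square mod 4
   only depends on its root mod 2, so any lift F of e satisfies P(u) = F(u)^2 mod 4,
   and P = F^2 because substituting u for w is injective. *)

Set Implicit Arguments.
Unset Strict Implicit.
Unset Printing Implicit Defensive.

Import GRing.Theory.
Local Open Scope ring_scope.

Lemma size_mul_le (R : nzSemiRingType) (p q : {poly R}) :
  (size (p * q)%R <= size p + size q)%N.
Proof. exact: leq_trans (size_mul_leq p q) (leq_pred _). Qed.

Lemma size_map_poly_le (R S : nzRingType) (f : R -> S) (p : {poly R}) :
  (size (map_poly f p) <= size p)%N.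
Proof. exact: size_poly. Qed.

Section HomogeneousComposition.
Variable R : comNzRingType.
Implicit Types (p q r : {poly R}) (k N M : nat).

(* [hcomp k q N p] is t^(kN) p(q t^-k), the numerator over t^(kN) of the
   Laurent polynomial p(q t^-k), when size p <= N. *)
Definition hcomp k q N p : {poly R} :=
  \sum_(i < N) p`_i *: (q ^+ i * 'X^(k * (N - i))).

Fact hcomp_is_linear k q N : linear (hcomp k q N).
Proof.
move=> a p r; rewrite /hcomp scaler_sumr -big_split; apply: eq_bigr => i _.
by rewrite coefD coefZ scalerDl scalerA.
Qed.

HB.instance Definition _ k q N :=
  GRing.isLinear.Build R {poly R} {poly R} _ (hcomp k q N) (hcomp_is_linear k q N).

Lemma hcomp_Xn k q N j : (j < N)%N -> hcomp k q N 'X^j = q ^+ j * 'X^(k * (N - j)).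
Proof.
move=> ltjN; rewrite /hcomp (bigD1 (Ordinal ltjN)) //= coefXn eqxx scale1r.
rewrite big1 ?addr0 // => i /negbTE neq_ij.
by rewrite coefXn -val_eqE /= in neq_ij *; rewrite neq_ij scale0r.
Qed.

Lemma hcompE k q N p : (size p <= N)%N ->
  hcomp k q N p = \sum_(i < size p) p`_i *: (q ^+ i * 'X^(k * (N - i))).
Proof.
move=> le_pN; rewrite -[p in LHS]coefK poly_def linear_sum; apply: eq_bigr => i _.
by rewrite linearZ /= hcomp_Xn // (leq_trans (ltn_ord i)).
Qed.

Lemma leval_hcomp k q p : leval p (k, q) = ((k * size p)%N, hcomp k q (size p) p).
Proof.
rewrite /leval /hcomp; elim: (polyseq p) => [|a s IHs] /=.
  by rewrite big_ord0 muln0 /lconst polyC0.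
rewrite IHs /ladd /lmul /lconst /= big_ord_recl /=; congr pair; first by rewrite mulnS.
rewrite expr0 mulr1 mul_polyC subn0 mulnS mul1r mulr_sumr; congr (_ + _).
by apply: eq_bigr => i _; rewrite /bump /= subSS exprS -scalerAr mulrA.
Qed.

Lemma hcompM k q N M p r : (size p <= N)%N -> (size r <= M)%N ->
  hcomp k q (N + M) (p * r) = hcomp k q N p * hcomp k q M r.
Proof.
move=> le_pN le_rM; rewrite -[p in LHS]coefK -[r in LHS]coefK !poly_def mulr_suml.
rewrite linear_sum hcompE // mulr_suml; apply: eq_bigr => i _.
rewrite mulr_sumr linear_sum hcompE // mulr_sumr; apply: eq_bigr => j _ /=.
have ltiN := leq_trans (ltn_ord i) le_pN; have ltjM := leq_trans (ltn_ord j) le_rM.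
rewrite -scalerAl -scalerAr linearZ /= linearZ scalerA /= -exprD hcomp_Xn; last first.
  by rewrite -addSn leq_add // ltnW.
have -> : (k * (N + M - (i + j)) = k * (N - i) + k * (M - j))%N.
  by rewrite -mulnDr; congr (k * _); lia.
by rewrite -scalerAl -scalerAr scalerA exprD exprD; congr (_ *: _); ring.
Qed.

Lemma hcomp_sqr k q N p : (size p <= N)%N ->
  hcomp k q (N + N) (p ^+ 2) = hcomp k q N p ^+ 2.
Proof. by move=> le_pN; rewrite expr2 hcompM. Qed.

Lemma hcomp_pad k q N d p : (size p <= N)%N ->
  hcomp k q (N + d) p = hcomp k q N p * 'X^(k * d).
Proof.
move=> le_pN; case: d => [|d]; first by rewrite addn0 muln0 expr0 mulr1.
rewrite -[p in LHS]mulr1 hcompM ?size_poly1 //.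
by rewrite -(expr0 'X) hcomp_Xn // expr0 mul1r subn0.
Qed.

Lemma hcomp_compN k q N p : (size p <= N)%N ->
  hcomp k q N (p \Po - 'X) = hcomp k (- q) N p.
Proof.
move=> le_pN; rewrite comp_polyE linear_sum hcompE //; apply: eq_bigr => i _ /=.
rewrite -scaleN1r exprZn !linearZ /= hcomp_Xn ?(leq_trans (ltn_ord i)) //.
by rewrite -[- q]scaleN1r exprZn -scalerAl scalerA mulrC.
Qed.

Lemma hcomp_compXn k m q N p : (0 < m)%N -> (size p <= N)%N ->
  hcomp k q (m * N) (p \Po 'X^m) = hcomp (k * m) (q ^+ m) N p.
Proof.
move=> m_gt0 le_pN; rewrite comp_polyE linear_sum hcompE //; apply: eq_bigr => i _ /=.
have ltiN := leq_trans (ltn_ord i) le_pN.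
rewrite -exprM linearZ /= hcomp_Xn; last by rewrite ltn_pmul2l.
by rewrite -exprM -mulnBr mulnA.
Qed.

Lemma hcomp_mulX k q N p : (size (p * 'X)%R <= N)%N ->
  'X^k * hcomp k q N (p * 'X) = q * hcomp k q N p.
Proof.
move=> le_pX_N; have [->|nz_p] := eqVneq p 0; first by rewrite mul0r !linear0 !mulr0.
move: le_pX_N; rewrite size_mulX // => ltpN; have le_pN := ltnW ltpN.
rewrite -[p in LHS]coefK poly_def mulr_suml !linear_sum hcompE //.
rewrite !mulr_sumr; apply: eq_bigr => i _ /=.
have ltiN := leq_ltn_trans (ltn_ord i) ltpN.
rewrite -scalerAl -exprSr linearZ /= hcomp_Xn // -!scalerAr; congr (_ *: _).
rewrite exprS mulrCA -mulrA -exprD; congr (_ * (_ * 'X^_)).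
by rewrite -mulnS subnSK // ltnW.
Qed.

Lemma hcomp_eq0 k q N p : GRing.lreg q -> q.[1] = 0 -> (size p <= N)%N ->
  hcomp k q N p = 0 -> p = 0.
Proof.
move=> reg_q q1_0; elim/poly_ind: p => [//|p c IHp] le_pXc_N hcomp0.
have [N0|N_gt0] := posnP N; first by apply/eqP; rewrite -size_poly_leq0 -N0.
have le_pX_N : (size (p * 'X)%R <= N)%N.
  have [->|nz_p] := eqVneq p 0; first by rewrite mul0r size_poly0.
  by move: le_pXc_N; rewrite size_MXaddC size_mulX // (negbTE nz_p).
have le_p_N : (size p <= N)%N.
  have [->|nz_p] := eqVneq p 0; first by rewrite size_poly0.
  by rewrite (leq_trans _ le_pX_N) // size_mulX.
have hcomp_pX := hcomp_mulX k q le_pX_N.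
(* Since q.[1] = 0, evaluating at 1 kills hcomp (p * 'X) and isolates c. *)
have hcomp_pX_1 : (hcomp k q N (p * 'X)).[1] = 0.
  move/(congr1 (horner^~ 1)): hcomp_pX.
  by rewrite !hornerM hornerXn expr1n mul1r q1_0 mul0r.
move: hcomp0; rewrite linearD -alg_polyC linearZ /= -(expr0 'X) hcomp_Xn //.
rewrite expr0 mul1r subn0 => hcomp0.
have c0 : c = 0.
  move/(congr1 (horner^~ 1)): hcomp0.
  by rewrite hornerD hornerZ hornerXn expr1n mulr1 hcomp_pX_1 add0r horner0.
move: hcomp0; rewrite c0 scale0r addr0 => hcomp_pX0.
have /reg_q/IHp -> // : q * hcomp k q N p = q * 0 by rewrite -hcomp_pX hcomp_pX0 !mulr0.
by rewrite mul0r scale0r addr0.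
Qed.

Lemma hcomp_mulXn_inj k q N m p p' : GRing.lreg q -> q.[1] = 0 ->
  (size p <= N)%N -> (size p' <= N)%N ->
  hcomp k q N p * 'X^m = hcomp k q N p' * 'X^m -> p = p'.
Proof.
move=> reg_q q1_0 le_pN le_p'N.
rewrite ![_ * 'X^m]mulrC => /(monic_lreg (monicXn _ m)) eq_hcomp.
apply/eqP; rewrite -subr_eq0; apply/eqP; apply: (hcomp_eq0 (k := k) (N := N) reg_q q1_0).
  by rewrite (leq_trans (size_polyD _ _)) // size_polyN geq_max le_pN le_p'N.
by rewrite linearB /= eq_hcomp subrr.
Qed.
End HomogeneousComposition.

Lemma map_hcomp (R S : comNzRingType) (f : {rmorphism R -> S}) k q N p :
  map_poly f (hcomp k q N p) = hcomp k (map_poly f q) N (map_poly f p).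
Proof.
rewrite rmorph_sum; apply: eq_bigr => i _.
by rewrite /= map_polyZ rmorphM !rmorphXn /= map_polyX coef_map.
Qed.

Section Char2.
Variable R : idomainType.
Hypothesis R_char2 : 2 \in [pchar R].
Implicit Types p q : {poly R}.

Lemma poly_char2 : 2 \in [pchar {poly R}].
Proof. by rewrite pchar_poly. Qed.

Lemma sqrrD_char2 p q : (p + q) ^+ 2 = p ^+ 2 + q ^+ 2.
Proof. by rewrite sqrrD -mulr_natr (pcharf0 poly_char2) mulr0 addr0. Qed.

Lemma eq_of_mulX_sqr p q r : 'X * p ^+ 2 = 'X * q ^+ 2 + r ^+ 2 -> p = q.
Proof.
have deriv_sqr (s : {poly R}) : (s ^+ 2)^`() = 0.
  by rewrite deriv_exp -mulr_natr (pcharf0 poly_char2) mulr0.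
move/(congr1 deriv); rewrite derivD !(derivM 'X) derivX !mul1r !deriv_sqr !mulr0 !addr0.
move=> sqr_pq; apply/eqP; rewrite -subr_eq0 (oppr_pchar2 poly_char2).
by rewrite -sqrf_eq0 sqrrD_char2 sqr_pq (addrr_pchar2 poly_char2).
Qed.
End Char2.

Lemma pchar_F2 : 2 \in [pchar 'F_2].
Proof. exact: pchar_Fp. Qed.

Lemma comp_polyX2_F2 (p : {poly 'F_2}) : p \Po 'X^2 = p ^+ 2.
Proof.
elim/poly_ind: p => [|p c IHp]; first by rewrite comp_poly0 expr0n.
rewrite comp_poly_MXaddC IHp (sqrrD_char2 pchar_F2) exprMn -polyC_exp; congr (_ + _%:P).
by case: c => [[|[|//]] ?]; apply: val_inj.
Qed.

Lemma hcomp_sqr_F2 (r : {poly 'F_2}) L n (p s : {poly 'F_2}) : (size p <= L + L)%N ->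
  hcomp 1 (r ^+ 2) (L + L) p * 'X^(n + n) = s ^+ 2 ->
  s = hcomp 1 (r ^+ 2) L (even_poly p) * 'X^n.
Proof.
move=> le_pL hcomp_p; set e := even_poly p; set o := odd_poly p.
have p_eo : p = e ^+ 2 + o ^+ 2 * 'X.
  by rewrite -[e ^+ 2]comp_polyX2_F2 -[o ^+ 2]comp_polyX2_F2 poly_even_odd.
have le_eL : (size e <= L)%N.
  by rewrite (leq_trans (size_even_poly p)) // leq_uphalf_double -addnn.
have le_oL : (size o <= L)%N.
  by rewrite (leq_trans (size_odd_poly p)) // leq_half_double -addnn leqW.
have le_o2X : (size (o ^+ 2 * 'X)%R <= L + L)%N.
  have [->|nz_o] := eqVneq o 0; first by rewrite expr0n mul0r size_poly0.
  rewrite size_mulX ?expf_neq0 //; have := size_poly_exp_leq o 2.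
  by move: le_oL nz_o; rewrite -size_poly_eq0; lia.
have := hcomp_mulX 1 (r ^+ 2) le_o2X; rewrite expr1 hcomp_sqr // => hcomp_o2X.
apply: (eq_of_mulX_sqr pchar_F2 (r := r * hcomp 1 (r ^+ 2) L o * 'X^n)).
rewrite -hcomp_p p_eo linearD /= hcomp_sqr // mulrA mulrDr hcomp_o2X.
by rewrite exprD; ring.
Qed.

Definition red2 (x : 'Z_4) : 'F_2 := (val x)%:R.
Definition lift2 (x : 'F_2) : 'Z_4 := (val x)%:R.

Fact red2_is_zmod_morphism : zmod_morphism red2.
Proof. by move=> [[|[|[|[|//]]]] ?] [[|[|[|[|//]]]] ?]; apply: val_inj. Qed.

Fact red2_is_monoid_morphism : monoid_morphism red2.
Proof.
by split=> [|[[|[|[|[|//]]]] ?] [[|[|[|[|//]]]] ?]]; apply: val_inj.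
Qed.

HB.instance Definition _ :=
  GRing.isZmodMorphism.Build 'Z_4 'F_2 red2 red2_is_zmod_morphism.
HB.instance Definition _ :=
  GRing.isMonoidMorphism.Build 'Z_4 'F_2 red2 red2_is_monoid_morphism.

Lemma lift2K : cancel lift2 red2.
Proof. by move=> [[|[|//]] ?]; apply: val_inj. Qed.

Lemma Z4poly_natr4 : 4%:R = 0 :> {poly 'Z_4}.
Proof. by rewrite -polyC_natr; congr polyC; apply: val_inj. Qed.

Lemma sqr_eq_red2 (u v : {poly 'Z_4}) :
  map_poly red2 u = map_poly red2 v -> u ^+ 2 = v ^+ 2.
Proof.
move=> /eqP; rewrite -subr_eq0 -rmorphB => /eqP red2_uv.
pose w := map_poly (fun x : 'Z_4 => (x != 0)%:R : 'Z_4) (u - v).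
(* The coefficients of u - v lie in {0, 2}. *)
have uv2w : u - v = w *+ 2.
  apply/polyP => i; rewrite coefMn coef_map_id0 //.
  have := congr1 (fun s : {poly 'F_2} => s`_i) red2_uv; rewrite coef_map coef0 /=.
  by case: (u - v)`_i => [[|[|[|[|//]]]] ?] // _; apply: val_inj.
have -> : u = v + w *+ 2 by rewrite -uv2w addrC subrK.
have -> : (v + w *+ 2) ^+ 2 = v ^+ 2 + 4%:R * (v * w + w ^+ 2) by ring.
by rewrite Z4poly_natr4 mul0r addr0.
Qed.

HB.instance Definition _ := GRing.RMorphism.copy red4 (intmul (1 : 'Z_4)).

(* t - 2 + t^-1 = alexQ / t *)
Definition alexQ : {poly 'Z_4} := ('X - 1) ^+ 2.

Lemma alexQ_monic : alexQ \is monic.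
Proof. by rewrite monic_exp // -polyC1 monicXsubC. Qed.

Lemma alexQ_root1 : alexQ.[1] = 0.
Proof. by rewrite horner_exp hornerD hornerN hornerX hornerC subrr expr0n. Qed.

Lemma map_red2_alexQ : map_poly red2 alexQ = ('X - 1) ^+ 2.
Proof. by rewrite rmorphXn rmorphB /= map_polyX rmorph1. Qed.

Lemma size_conway_C_iz c : size (conway_C_iz c) = size c.
Proof. by rewrite size_comp_poly2 // size_polyN size_polyX. Qed.

Lemma size_conway_C_sq c : (size (conway_C_sq c) <= 2 * size c)%N.
Proof.
have [->|nz_c] := eqVneq c 0; first by rewrite /conway_C_sq comp_poly0 size_poly0.
rewrite (leq_trans (size_comp_poly_leq _ _)) // size_polyXn /=.
by rewrite -size_poly_gt0 in nz_c; case: (size c) nz_c => // s _ /=; lia.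
Qed.

Lemma size_conway_prod_mod4 c : (size (conway_prod_mod4 c) <= 4 * size c)%N.
Proof.
rewrite /conway_prod_mod4 (leq_trans (size_map_poly_le _ _)) //.
rewrite (leq_trans (size_mul_le _ _)) // size_conway_C_iz.
rewrite (leq_trans (leq_add (size_mul_le _ _) (leqnn _))) //.
by rewrite addnAC addnn -mul2n -[4%N]/(2 + 2)%N mulnDl leq_add2l size_conway_C_sq.
Qed.

Lemma alex_prod_mod4 c :
  lmap red4 (lmul (lmul (alex_t c) (alex_mt c)) (alex_t2 c)) =
  ((4 * size c)%N, hcomp 1 alexQ (4 * size c) (conway_prod_mod4 c)).
Proof.
set cb := map_poly red4 c.
have le_cbN : (size cb <= size c)%N by exact: size_map_poly_le.
have alex_t_mod4 : map_poly red4 (('X - 1) ^+ 2) = alexQ.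
  by rewrite rmorphXn rmorphB /= map_polyX rmorph1.
have alex_mt_mod4 : map_poly red4 (- ('X + 1) ^+ 2) = - alexQ.
  rewrite rmorphN rmorphXn rmorphD /= map_polyX rmorph1 /alexQ; congr (- _).
  have -> : ('X + 1) ^+ 2 = ('X - 1) ^+ 2 + 4%:R * 'X :> {poly 'Z_4} by ring.
  by rewrite Z4poly_natr4 mul0r addr0.
have alex_t2_mod4 : map_poly red4 (('X ^+ 2 - 1) ^+ 2) = alexQ ^+ 2.
  rewrite rmorphXn rmorphB rmorphXn /= map_polyX rmorph1 /alexQ.
  have -> : ('X ^+ 2 - 1) ^+ 2 = (('X - 1) ^+ 2) ^+ 2 + 4%:R * ('X * ('X - 1) ^+ 2)
    :> {poly 'Z_4} by ring.
  by rewrite Z4poly_natr4 mul0r addr0.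
have map_C_iz : cb \Po - 'X = map_poly red4 (conway_C_iz c).
  by rewrite map_comp_poly rmorphN /= map_polyX.
have map_C_sq : cb \Po 'X^2 = map_poly red4 (conway_C_sq c).
  by rewrite map_comp_poly map_polyXn.
have le_iz_N : (size (cb \Po - 'X)%R <= size c)%N.
  by rewrite map_C_iz (leq_trans (size_map_poly_le _ _)) // size_conway_C_iz.
have le_sq_2N : (size (cb \Po 'X^2)%R <= 2 * size c)%N.
  by rewrite map_C_sq (leq_trans (size_map_poly_le _ _)) // size_conway_C_sq.
rewrite /alex_t /alex_mt /alex_t2 !leval_hcomp /lmul /lmap /=.
congr pair; first by rewrite -!mulnDl.
rewrite !rmorphM /= !map_hcomp alex_t_mod4 alex_mt_mod4 alex_t2_mod4 -/cb.
rewrite -hcomp_compN // -(hcomp_compXn 1 _ (isT : (0 < 2)%N) le_cbN).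
rewrite mulrAC -!hcompM //; last by rewrite (leq_trans (size_mul_le _ _)) // leq_add.
rewrite /conway_prod_mod4 !rmorphM /= -map_C_iz -map_C_sq -/cb.
by congr hcomp; set n := size c; lia.
Qed.

Lemma cond_iiE c : cond_ii c <-> exists n (g : {poly 'Z_4}),
  g * g * 'X^(4 * size c) = hcomp 1 alexQ (4 * size c) (conway_prod_mod4 c) * 'X^(n + n).
Proof.
rewrite /cond_ii /leq_laurent alex_prod_mod4.
by split=> [[[n g]] | [n [g]]]; [exists n, g | exists (n, g)].
Qed.

Lemma cond_i_ii c : cond_i c -> cond_ii c.
Proof.
move=> [F sqrF]; apply/cond_iiE; exists (size F), (hcomp 1 alexQ (size F) F).
have le_P_4N := size_conway_prod_mod4 c.
have le_P_2F : (size (conway_prod_mod4 c) <= size F + size F)%N.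
  by rewrite -sqrF expr2 size_mul_le.
have := hcomp_pad 1 alexQ (4 * size c) le_P_2F.
have := hcomp_pad 1 alexQ (size F + size F) le_P_4N.
by rewrite -hcompM // -expr2 sqrF !mul1n => <- <-; rewrite addnC.
Qed.

Lemma cond_ii_i c : cond_ii c -> cond_i c.
Proof.
move/cond_iiE => [n [g sqr_g]].
have split4 : (4 * size c = 2 * size c + 2 * size c)%N by rewrite -mulnDl.
have le_P := size_conway_prod_mod4 c; rewrite split4 in sqr_g le_P.
set L := (2 * size c)%N in split4 sqr_g le_P; set P := conway_prod_mod4 c in sqr_g le_P *.
set e := even_poly (map_poly red2 P).
have le_P2 : (size (map_poly red2 P) <= L + L)%N.
  exact: leq_trans (size_map_poly_le _ _) le_P.
have red2_g : map_poly red2 (g * 'X^L) = hcomp 1 (('X - 1) ^+ 2) L e * 'X^n.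
  apply: hcomp_sqr_F2 => //; rewrite -map_red2_alexQ -map_hcomp.
  rewrite -(map_polyXn red2) -rmorphM -rmorphXn /= -sqr_g.
  by rewrite exprMn -exprM muln2 -addnn expr2.
pose F := map_poly lift2 e.
have red2_F : map_poly red2 F = e.
  by apply/polyP => i; rewrite coef_map /= coef_map_id0 // lift2K.
have le_F : (size F <= L)%N.
  rewrite (leq_trans (size_map_poly_le _ _)) // (leq_trans (size_even_poly _)) //.
  by rewrite leq_uphalf_double -addnn.
exists F; have reg_alexQ := monic_lreg alexQ_monic.
apply/esym/(hcomp_mulXn_inj (k := 1) (m := n + n) reg_alexQ alexQ_root1 le_P).
  by rewrite expr2 (leq_trans (size_mul_le _ _)) // leq_add.
rewrite -sqr_g hcomp_sqr // (addnn n) -(muln2 n) exprM -exprMn.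
rewrite -(sqr_eq_red2 (u := g * 'X^L)); first by rewrite exprMn -exprM muln2 -addnn expr2.
by rewrite red2_g rmorphM /= map_hcomp map_polyXn red2_F map_red2_alexQ.
Qed.

Theorem proposition1p2 (Knot : Type) (amphicheiral : Knot -> Prop)
    (conway : Knot -> {poly int})
    (conway0 : forall K : Knot, (conway K).[0] = 1) :
  (forall K : Knot, amphicheiral K -> cond_i (conway K)) <->
  (forall K : Knot, amphicheiral K -> cond_ii (conway K)).
Proof.
by split=> cond K amphK; [apply: cond_i_ii | apply: cond_ii_i]; apply: cond.
Qed.
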